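(* Let $n\ge 2$ be an integer. Then $$\binom{n^3-\lfloor\frac{(n-1)^3+1}{2}\rfloor}{3n^2-3n+1}+\binom{n^3-\lfloor\frac{(n-1)^3+2}{2}\rfloor}{3n^2-3n+1}< n^{3n^2}.$$ *)

From mathcomp Require Import all_boot.

From mathcomp Require Import all_boot zify.

(* Write k = 3n^2 - 3n + 1 and m = n^3 - floor(((n-1)^3 + 1)/2), the larger of
   the two upper indices, so that 2m <= n^3 + 3n^2 - 3n + 1 and the left-hand
   side is at most 2 C(m, k).  Since k^k <= (2k)(2k-1)...(k+1) = C(2k, k) k!
   <= 4^k k!, we have C(m, k) <= m^k / k! <= (4m/k)^k.  For n >= 9, 4m <= nk,
   so 2 C(m, k) <= 2 n^k < n^k n^(3n-1) = n^(3n^2).  For 2 <= n <= 8 the crude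
   bound 2 C(m, k) <= 2^(m+1) already beats n^(3n^2). *)

Lemma ffact_leq_expn n j : n ^_ j <= n ^ j.
Proof.
rewrite ffact_prod -[j in n ^ j]card_ord -prod_nat_const.
by apply: leq_prod => i _; exact: leq_subr.
Qed.

Lemma expn_leq_ffact k j : k ^ j <= (k + j) ^_ j.
Proof.
elim: j => [|j IHj] //.
by rewrite addnS ffactSS expnS leq_mul // ltnW // ltnS leq_addr.
Qed.

Lemma bin_leq_exp2 m k : 'C(m, k) <= 2 ^ m.
Proof.
have [le_km | lt_mk] := leqP k m; last by rewrite bin_small.
rewrite -[2]/(1 + 1) expnDn (bigD1 (Ordinal (le_km : k < m.+1))) //=.
by rewrite !exp1n !muln1 leq_addr.
Qed.

Lemma expn_leq_exp4_fact k : k ^ k <= 4 ^ k * k`!.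
Proof.
apply: leq_trans (expn_leq_ffact k k) _.
rewrite -bin_ffact leq_mul2r -[4]/(2 ^ 2) -expnM mul2n -addnn.
by rewrite bin_leq_exp2 orbT.
Qed.

Lemma bin_mul_expn_leq m k : 'C(m, k) * k ^ k <= (4 * m) ^ k.
Proof.
apply: leq_trans (_ : 'C(m, k) * (4 ^ k * k`!) <= _).
  by rewrite leq_mul2l expn_leq_exp4_fact orbT.
by rewrite mulnCA bin_ffact expnMn leq_mul2l ffact_leq_expn orbT.
Qed.

Lemma bin_leq_expn m k b : 0 < k -> 4 * m <= b * k -> 'C(m, k) <= b ^ k.
Proof.
move=> k_gt0 le_4m_bk.
have : 'C(m, k) * k ^ k <= b ^ k * k ^ k.
  by rewrite -expnMn (leq_trans (bin_mul_expn_leq m k)) // leq_exp2r.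
by rewrite leq_mul2r expn_eq0 eqn0Ngt k_gt0.
Qed.

Lemma double_bin_lt_large n m :
  9 <= n -> 2 * m + 3 * n <= n ^ 3 + 3 * n ^ 2 + 1 ->
  2 * 'C(m, 3 * n ^ 2 - 3 * n + 1) < n ^ (3 * n ^ 2).
Proof.
move=> n_ge9 le_2m; set k := 3 * n ^ 2 - 3 * n + 1.
have -> : 3 * n ^ 2 = k + (3 * n - 1) by rewrite /k; nia.
have bin_le : 'C(m, k) <= n ^ k by apply: bin_leq_expn; rewrite /k; nia.
have n_lt_pow : 2 < n ^ (3 * n - 1).
  by rewrite (leq_trans _ (leq_pexp2l _ (_ : 1 <= 3 * n - 1))) ?expn1 //; lia.
have pow_gt0 : 0 < n ^ k by rewrite expn_gt0; lia.
rewrite expnD; apply: leq_trans (_ : 2 * 'C(m, k) < 3 * n ^ k) _; first by lia.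
by rewrite mulnC leq_mul2l n_lt_pow orbT.
Qed.

Lemma double_bin_lt_small n m k :
  2 <= n <= 8 -> 2 * m + 3 * n <= n ^ 3 + 3 * n ^ 2 + 1 ->
  2 * 'C(m, k) < n ^ (3 * n ^ 2).
Proof.
move=> /andP[n_ge2 n_le8] le_2m.
apply: leq_ltn_trans (_ : 2 * 'C(m, k) <= 2 ^ m.+1) _.
  by rewrite expnS leq_mul2l bin_leq_exp2 orbT.
have [n_ge4 | n_lt4] := leqP 4 n.
  apply: leq_trans (_ : 4 ^ (3 * n ^ 2) <= _); last by rewrite leq_exp2r; lia.
  by rewrite -[4]/(2 ^ 2) -expnM ltn_exp2l //; nia.
apply: leq_trans (_ : 2 ^ (3 * n ^ 2) <= _); last by rewrite leq_exp2r; nia.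
by rewrite ltn_exp2l //; nia.
Qed.

Theorem proposition4 (n : nat) (hn : 2 <= n) :
  'C(n ^ 3 - ((n - 1) ^ 3 + 1) %/ 2, 3 * n ^ 2 - 3 * n + 1)
  + 'C(n ^ 3 - ((n - 1) ^ 3 + 2) %/ 2, 3 * n ^ 2 - 3 * n + 1)
  < n ^ (3 * n ^ 2).
Proof.
set k := 3 * n ^ 2 - 3 * n + 1.
set q1 := ((n - 1) ^ 3 + 1) %/ 2; set q2 := ((n - 1) ^ 3 + 2) %/ 2.
have le_q1 : (n - 1) ^ 3 <= 2 * q1 by rewrite /q1; lia.
have le_q12 : q1 <= q2 by apply: leq_div2r; rewrite leq_add2l.
have le_2m : 2 * (n ^ 3 - q1) + 3 * n <= n ^ 3 + 3 * n ^ 2 + 1.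
  have cube_pred : (n - 1) ^ 3 + 3 * n ^ 2 = n ^ 3 + 3 * n - 1 by nia.
  lia.
apply: leq_ltn_trans (_ : _ + _ <= 2 * 'C(n ^ 3 - q1, k)) _.
  by rewrite mul2n -addnn leq_add2l leq_bin2l // leq_sub2l.
have [n_ge9 | n_lt9] := leqP 9 n; first exact: double_bin_lt_large.
by apply: double_bin_lt_small => //; rewrite hn -ltnS.
Qed.
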